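(* For every mapping $l$: if $\mathrm{WFMap}(l)$ then $\textsc{UpshiftAll}(\textsc{DownshiftAll}(l))=l$.
   Context: Expressions: $e ::= \lambda.\,e\mid(e\ e)\mid\$i\mid\&i\mid t$ with de Bruijn indices $\$i$ ($i\in\mathbb{N}$), overshifted markers $\&i$ ($i\in\mathbb{Z}$) and primitives $t$. Downshift: $\downarrow_d(\lambda.b)=\lambda.\downarrow_{d+1}b$; $\downarrow_d(f\ x)=(\downarrow_d f)(\downarrow_d x)$; $\downarrow_d\$i=\$i$ if $i<d$, $\$(i-1)$ if $i>d$, $\&(i-1)$ if $i=d$; $\downarrow_d\&i=\&(i-1)$; $\downarrow_d t=t$. Upshift: $\uparrow_d(\lambda.b)=\lambda.\uparrow_{d+1}b$; $\uparrow_d(f\ x)=(\uparrow_d f)(\uparrow_d x)$; $\uparrow_d\$i=\$i$ if $i<d$, $\$(i+1)$ if $i\ge d$; $\uparrow_d\&i=\&(i+1)$ if $i+1\ne d$, $\$(i+1)$ if $i+1=d$; $\uparrow_d t=t$. A mapping is a finite map from abstraction variables $\alpha$ and holes $??_j$ to expressions. $\textsc{DownshiftAll}(l)$ (resp. $\textsc{UpshiftAll}(l)$) is the mapping with the same keys obtained by applying $\downarrow_0$ (resp. $\uparrow_0$) to every bound expression. Well-formedness: $\mathrm{WF}_d(\lambda.b)=\mathrm{WF}_{d+1}(b)$; $\mathrm{WF}_d(f\ x)=\mathrm{WF}_d(f)\wedge\mathrm{WF}_d(x)$; $\mathrm{WF}_d(\$i)$ true; $\mathrm{WF}_d(\&i)$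 true iff $i<d$; $\mathrm{WF}_d(t)$ true. $\mathrm{WFMap}(l)$ means every expression in the range of $l$ satisfies $\mathrm{WF}_0$. *)

From Stdlib Require Import ZArith Arith List.
Import ListNotations.
Open Scope Z_scope.

(* Expressions over a type Prim of primitives:
   e ::= lam e | app e e | $i (i : nat) | &i (i : Z) | t *)
Inductive expr (Prim : Type) : Type :=
| Lam : expr Prim -> expr Prim
| App : expr Prim -> expr Prim -> expr Prim
| Var : nat -> expr Prim
| Over : Z -> expr Prim             (* &i, overshifted marker *)
| Prim_ : Prim -> expr Prim.
Arguments Lam {Prim} _.
Arguments App {Prim} _ _.
Arguments Var {Prim} _.
Arguments Over {Prim} _.
Arguments Prim_ {Prim} _.

Fixpoint downshift {P : Type} (d : nat) (e : expr P) : expr P :=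
  match e with
  | Lam b => Lam (downshift (S d) b)
  | App f x => App (downshift d f) (downshift d x)
  | Var i => if Nat.ltb i d then Var i
             else if Nat.ltb d i then Var (i - 1)%nat
             else Over (Z.of_nat i - 1)
  | Over i => Over (i - 1)
  | Prim_ t => Prim_ t
  end.

Fixpoint upshift {P : Type} (d : nat) (e : expr P) : expr P :=
  match e with
  | Lam b => Lam (upshift (S d) b)
  | App f x => App (upshift d f) (upshift d x)
  | Var i => if Nat.ltb i d then Var i else Var (S i)
  | Over i => if Z.eqb (i + 1) (Z.of_nat d) then Var (Z.to_nat (i + 1))
              else Over (i + 1)
  | Prim_ t => Prim_ t
  end.

Fixpoint WF {P : Type} (d : nat) (e : expr P) : Prop :=
  match e with
  | Lam b => WF (S d) b
  | App f x => WF d f /\ WF d x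
  | Var _ => True
  | Over i => i < Z.of_nat d
  | Prim_ _ => True
  end.

Inductive key (AbsVar : Type) : Type :=
| KAbs : AbsVar -> key AbsVar
| KHole : nat -> key AbsVar.
Arguments KAbs {AbsVar} _.
Arguments KHole {AbsVar} _.

Definition mapping (A P : Type) : Type := list (key A * expr P).

Definition DownshiftAll {A P : Type} (l : mapping A P) : mapping A P :=
  map (fun kv => (fst kv, downshift 0 (snd kv))) l.

Definition UpshiftAll {A P : Type} (l : mapping A P) : mapping A P :=
  map (fun kv => (fst kv, upshift 0 (snd kv))) l.

Definition WFMap {A P : Type} (l : mapping A P) : Prop :=
  forall k e, In (k, e) l -> WF 0 e.

From Stdlib Require Import ZArith Arith List Lia.

(* Downshifting at depth [d] turns [$d] into the marker [&(d-1)] and lowers every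
   other marker by one; upshifting at depth [d] raises markers back, turning exactly
   [&(d-1)] into [$d].  The round trip is therefore the identity unless the term
   already contained [&d] at depth [d], which well-formedness excludes. *)

Lemma upshift_downshift_Var {P : Type} (d n : nat) :
  upshift d (downshift d (@Var P n)) = Var n.
Proof.
  simpl.
  destruct (Nat.ltb_spec n d) as [Hlt | Hge]; simpl.
  - now rewrite (proj2 (Nat.ltb_lt n d) Hlt).
  - destruct (Nat.ltb_spec d n) as [Hgt | Hle]; simpl.
    + rewrite (proj2 (Nat.ltb_ge (n - 1) d)) by lia.
      f_equal; lia.
    + replace n with d by lia.
      rewrite Z.sub_add, Z.eqb_refl.
      f_equal; lia.
Qed.

Lemma upshift_downshift {P : Type} (e : expr P) (d : nat) :
  WF d e -> upshift d (downshift d e) = e.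
Proof.
  revert d; induction e as [b IHb | f IHf x IHx | n | i | t]; intros d Hwf; simpl in Hwf.
  - simpl; now rewrite IHb.
  - destruct Hwf as [Hf Hx]; simpl; now rewrite IHf, IHx.
  - apply upshift_downshift_Var.
  - simpl; rewrite Z.sub_add.
    now rewrite (proj2 (Z.eqb_neq i (Z.of_nat d))) by lia.
  - reflexivity.
Qed.

Theorem lemmaB5 (A P : Type) (l : mapping A P) :
  WFMap l -> UpshiftAll (DownshiftAll l) = l.
Proof.
  intros Hwf.
  unfold UpshiftAll, DownshiftAll; rewrite map_map.
  transitivity (map id l); [| apply map_id].
  apply map_ext_in; intros [k e] Hin; simpl.
  now rewrite upshift_downshift by exact (Hwf k e Hin).
Qed.
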